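(* Let $q\ge2$ and $a_1,\dots,a_q\in\,]0,\infty[$ such that not all $a_i$ are equal, and let $a=\mathrm{diag}(a_1,\dots,a_q)$. Then the functions $f_r:U(q,\mathbb F)\to\mathbb R$, $f_r(k)=\ln\Delta_r(k^*ak)$, $r=1,\dots,q-1$, together with the constant function $1$, are linearly independent over $\mathbb R$.
   Context: $\mathbb F\in\{\mathbb R,\mathbb C,\mathbb H\}$. $\Delta_r(x)$ is the $r$-th leading principal minor of a Hermitian matrix $x$ (Dieudonné determinant $\det A=(\det_{\mathbb C}A)^{1/2}$ for $\mathbb H$). *)

From Stdlib Require Import Reals Lra ClassicalEpsilon FunctionalExtensionality.
From HB Require Import structures.
From mathcomp Require Import all_boot all_algebra.

Set Implicit Arguments.
Unset Strict Implicit.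
Unset Printing Implicit Defensive.

Local Open Scope R_scope.

Section ClassicalChoice.
Variable T : Type.

Definition cfind (P : pred T) (n : nat) : option T :=
  match excluded_middle_informative (exists x, P x) with
  | left H => Some (proj1_sig (constructive_indefinite_description _ H))
  | right _ => None
  end.

Lemma cfind_correct P n x : cfind P n = Some x -> P x.
Proof.
rewrite /cfind; case: excluded_middle_informative => // H [<-].
exact: (proj2_sig (constructive_indefinite_description _ H)).
Qed.

Lemma cfind_complete (P : pred T) : (exists x, P x) -> exists n, cfind P n.
Proof.
move=> H; exists 0%N; rewrite /cfind; case: excluded_middle_informative => //.
Qed.

Lemma cfind_ext (P Q : pred T) : P =1 Q -> cfind P =1 cfind Q.
Proof.
move=> PQ n; have -> : P = Q by apply: functional_extensionality.
by [].
Qed.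
End ClassicalChoice.

Definition eqR (x y : R) : bool := if Req_EM_T x y then true else false.
Lemma eqRP : Equality.axiom eqR.
Proof. by move=> x y; rewrite /eqR; case: Req_EM_T => H; constructor. Qed.
HB.instance Definition _ := hasDecEq.Build R eqRP.
HB.instance Definition _ :=
  hasChoice.Build R (@cfind_correct R) (@cfind_complete R) (@cfind_ext R).

Lemma R_addA : associative Rplus. Proof. by move=> *; rewrite Rplus_assoc. Qed.
Lemma R_addC : commutative Rplus. Proof. exact: Rplus_comm. Qed.
Lemma R_add0 : left_id 0 Rplus. Proof. exact: Rplus_0_l. Qed.
Lemma R_addN : left_inverse 0 Ropp Rplus. Proof. exact: Rplus_opp_l. Qed.
HB.instance Definition _ := GRing.isZmodule.Build R R_addA R_addC R_add0 R_addN.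

Lemma R_mulA : associative Rmult. Proof. by move=> *; rewrite Rmult_assoc. Qed.
Lemma R_mulC : commutative Rmult. Proof. exact: Rmult_comm. Qed.
Lemma R_mul1 : left_id 1 Rmult. Proof. exact: Rmult_1_l. Qed.
Lemma R_mulDl : left_distributive Rmult (@GRing.add R). Proof. exact: Rmult_plus_distr_r. Qed.
Lemma R_one_neq0 : (1 : R) != @GRing.zero R.
Proof. by apply/eqP; exact: R1_neq_R0. Qed.
HB.instance Definition _ :=
  GRing.Zmodule_isComNzRing.Build R R_mulA R_mulC R_mul1 R_mulDl R_one_neq0.

Record C := mkC { cre : R; cim : R }.

Definition C2p (z : C) : R * R := (cre z, cim z).
Definition p2C (p : R * R) : C := mkC p.1 p.2.
Lemma C2pK : cancel C2p p2C. Proof. by case. Qed.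
HB.instance Definition _ := Equality.copy C (can_type C2pK).
HB.instance Definition _ := Choice.copy C (can_type C2pK).

Definition C0 := mkC 0 0.
Definition C1 := mkC 1 0.
Definition Copp (z : C) := mkC (- cre z) (- cim z).
Definition Cadd (z w : C) := mkC (cre z + cre w) (cim z + cim w).
Definition Cmul (z w : C) :=
  mkC (cre z * cre w - cim z * cim w) (cre z * cim w + cim z * cre w).
Definition Cconj (z : C) := mkC (cre z) (- cim z).
Definition RtoC (x : R) := mkC x 0.

Lemma C_addA : associative Cadd.
Proof. by case=> ? ? [? ?] [? ?]; rewrite /Cadd /Copp /C0 /=; f_equal; ring. Qed.
Lemma C_addC : commutative Cadd.
Proof. by case=> ? ? [? ?]; rewrite /Cadd /Copp /C0 /=; f_equal; ring. Qed.
Lemma C_add0 : left_id C0 Cadd.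
Proof. by case=> ? ?; rewrite /Cadd /Copp /C0 /=; f_equal; ring. Qed.
Lemma C_addN : left_inverse C0 Copp Cadd.
Proof. by case=> ? ?; rewrite /Cadd /Copp /C0 /=; f_equal; ring. Qed.
HB.instance Definition _ := GRing.isZmodule.Build C C_addA C_addC C_add0 C_addN.

Lemma C_mulA : associative Cmul.
Proof. by case=> ? ? [? ?] [? ?]; rewrite /Cmul /C1 /=; f_equal; ring. Qed.
Lemma C_mulC : commutative Cmul.
Proof. by case=> ? ? [? ?]; rewrite /Cmul /C1 /=; f_equal; ring. Qed.
Lemma C_mul1 : left_id C1 Cmul.
Proof. by case=> ? ?; rewrite /Cmul /C1 /=; f_equal; ring. Qed.
Lemma C_mulDl : left_distributive Cmul Cadd.
Proof. by case=> ? ? [? ?] [? ?]; rewrite /Cmul /C1 /= /Cadd /=; f_equal; ring. Qed.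
Lemma C_one_neq0 : C1 != @GRing.zero C.
Proof. apply/eqP=> -[]; exact: R1_neq_R0. Qed.
HB.instance Definition _ :=
  GRing.Zmodule_isComNzRing.Build C C_mulA C_mulC C_mul1 C_mulDl C_one_neq0.

(* Hamilton's quaternions  x = h0 + h1 i + h2 j + h3 k  (ij = k).      *)
Record H := mkH { h0 : R; h1 : R; h2 : R; h3 : R }.

Definition H2p (x : H) : R * R * R * R := (h0 x, h1 x, h2 x, h3 x).
Definition p2H (p : R * R * R * R) : H := mkH p.1.1.1 p.1.1.2 p.1.2 p.2.
Lemma H2pK : cancel H2p p2H. Proof. by case. Qed.
HB.instance Definition _ := Equality.copy H (can_type H2pK).
HB.instance Definition _ := Choice.copy H (can_type H2pK).

Definition H0 := mkH 0 0 0 0.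
Definition H1 := mkH 1 0 0 0.
Definition Hopp (x : H) := mkH (- h0 x) (- h1 x) (- h2 x) (- h3 x).
Definition Hadd (x y : H) :=
  mkH (h0 x + h0 y) (h1 x + h1 y) (h2 x + h2 y) (h3 x + h3 y).
Definition Hmul (x y : H) :=
  mkH (h0 x * h0 y - h1 x * h1 y - h2 x * h2 y - h3 x * h3 y)
      (h0 x * h1 y + h1 x * h0 y + h2 x * h3 y - h3 x * h2 y)
      (h0 x * h2 y - h1 x * h3 y + h2 x * h0 y + h3 x * h1 y)
      (h0 x * h3 y + h1 x * h2 y - h2 x * h1 y + h3 x * h0 y).
Definition Hconj (x : H) := mkH (h0 x) (- h1 x) (- h2 x) (- h3 x).
Definition RtoH (x : R) := mkH x 0 0 0.

Lemma H_addA : associative Hadd.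
Proof. by case=> ? ? ? ? [? ? ? ?] [? ? ? ?]; rewrite /Hadd /Hopp /H0 /=; f_equal; ring. Qed.
Lemma H_addC : commutative Hadd.
Proof. by case=> ? ? ? ? [? ? ? ?]; rewrite /Hadd /Hopp /H0 /=; f_equal; ring. Qed.
Lemma H_add0 : left_id H0 Hadd.
Proof. by case=> ? ? ? ?; rewrite /Hadd /Hopp /H0 /=; f_equal; ring. Qed.
Lemma H_addN : left_inverse H0 Hopp Hadd.
Proof. by case=> ? ? ? ?; rewrite /Hadd /Hopp /H0 /=; f_equal; ring. Qed.
HB.instance Definition _ := GRing.isZmodule.Build H H_addA H_addC H_add0 H_addN.

Lemma H_mulA : associative Hmul.
Proof. by case=> ? ? ? ? [? ? ? ?] [? ? ? ?]; rewrite /Hmul /H1 /=; f_equal; ring. Qed.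
Lemma H_mul1 : left_id H1 Hmul.
Proof. by case=> ? ? ? ?; rewrite /Hmul /H1 /=; f_equal; ring. Qed.
Lemma H_mulr1 : right_id H1 Hmul.
Proof. by case=> ? ? ? ?; rewrite /Hmul /H1 /=; f_equal; ring. Qed.
Lemma H_mulDl : left_distributive Hmul Hadd.
Proof.
by case=> ? ? ? ? [? ? ? ?] [? ? ? ?]; rewrite /Hmul /H1 /= /Hadd /=; f_equal; ring.
Qed.
Lemma H_mulDr : right_distributive Hmul Hadd.
Proof.
by case=> ? ? ? ? [? ? ? ?] [? ? ? ?]; rewrite /Hmul /H1 /= /Hadd /=; f_equal; ring.
Qed.
Lemma H_one_neq0 : H1 != @GRing.zero H.
Proof. apply/eqP=> -[]; exact: R1_neq_R0. Qed.
HB.instance Definition _ :=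
  GRing.Zmodule_isNzRing.Build H H_mulA H_mul1 H_mulr1 H_mulDl H_mulDr H_one_neq0.

(* x = hA x + hB x * j  with hA x, hB x complex (i.e. in R + R i). *)
Definition hA (x : H) : C := mkC (h0 x) (h1 x).
Definition hB (x : H) : C := mkC (h2 x) (h3 x).

Definition Rpositive (x : R) : Prop := 0 < x.

Local Close Scope R_scope.
Local Open Scope ring_scope.

Definition lead_sub (T : Type) (q : nat) (r : 'I_q) (x : 'M[T]_q) : 'M[T]_r :=
  \matrix_(i, j) x (widen_ord (ltnW (ltn_ord r)) i) (widen_ord (ltnW (ltn_ord r)) j).

Definition adjR q (k : 'M[R]_q) : 'M[R]_q := k^T.
Definition unitaryR q (k : 'M[R]_q) : Prop := adjR k *m k = 1%:M.
Definition diagR q (a : 'I_q -> R) : 'M[R]_q := diag_mx (\row_i a i).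
Definition DeltaR q (r : 'I_q) (x : 'M[R]_q) : R := \det (lead_sub r x).
Definition fR q (a : 'I_q -> R) (r : 'I_q) (k : 'M[R]_q) : R :=
  ln (DeltaR r (adjR k *m diagR a *m k)).

Definition adjC q (k : 'M[C]_q) : 'M[C]_q := (map_mx Cconj k)^T.
Definition unitaryC q (k : 'M[C]_q) : Prop := adjC k *m k = 1%:M.
Definition diagC q (a : 'I_q -> R) : 'M[C]_q := diag_mx (\row_i RtoC (a i)).
(* r-th leading principal minor; for Hermitian x it is real, and we take
   its real part to view it as an element of R *)
Definition DeltaC q (r : 'I_q) (x : 'M[C]_q) : R := cre (\det (lead_sub r x)).
Definition fC q (a : 'I_q -> R) (r : 'I_q) (k : 'M[C]_q) : R :=
  ln (DeltaC r (adjC k *m diagC a *m k)).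

Definition adjH q (k : 'M[H]_q) : 'M[H]_q := (map_mx Hconj k)^T.
Definition unitaryH q (k : 'M[H]_q) : Prop := adjH k *m k = 1%:M.
Definition diagH q (a : 'I_q -> R) : 'M[H]_q := diag_mx (\row_i RtoH (a i)).
(* complex 2n x 2n representation of a quaternionic n x n matrix
   X = A + B j  (A, B complex):  [[A, B], [-conj B, conj A]] *)
Definition cplx_rep n (x : 'M[H]_n) : 'M[C]_(n + n) :=
  block_mx (map_mx hA x) (map_mx hB x)
           (- map_mx (fun z => Cconj (hB z)) x) (map_mx (fun z => Cconj (hA z)) x).
(* Dieudonne determinant  det X = (det_C X)^(1/2)  (det_C X is real >= 0) *)
Definition dieudonne_det n (x : 'M[H]_n) : R := sqrt (cre (\det (cplx_rep x))).
Definition DeltaH q (r : 'I_q) (x : 'M[H]_q) : R := dieudonne_det (lead_sub r x).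
Definition fH q (a : 'I_q -> R) (r : 'I_q) (k : 'M[H]_q) : R :=
  ln (DeltaH r (adjH k *m diagH a *m k)).

Definition lin_indep_with_one (K : Type) (P : K -> Prop) (q : nat)
    (f : 'I_q -> K -> R) : Prop :=
  forall (c0 : R) (c : 'I_q -> R),
    (forall k, P k -> c0 * 1 + \sum_(r < q | (0 < r)%N) c r * f r k = 0) ->
    c0 = 0 /\ (forall r : 'I_q, (0 < r)%N -> c r = 0).

(* At a permutation matrix P_s, unitary over each of R, C and H, the matrix
   P_s^* a P_s is diagonal with entries a_(s^-1 i), so f_r(P_s) is the partial
   sum \sum_(i < r) ln a_(s^-1 i); over H the complex representation doubles
   the diagonal and the Dieudonne square root undoes this.  A relation
   c0 + \sum_r c_r f_r = 0 then says that \sum_i ln a_(s i) * D_i does not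
   depend on s, where D_i = \sum_(r > i) c_r.  Comparing s with its composite
   with the transposition of j and x gives (D_x - D_j)(ln a_j - ln a_x) = 0,
   so D is constant because a is not; as D_(q-1) = 0, every D_i, hence every
   c_r and finally c0, vanishes. *)

From Stdlib Require Import Reals.
From HB Require Import structures.
From mathcomp Require Import all_boot all_algebra fingroup perm ring zify.

Set Implicit Arguments.
Unset Strict Implicit.
Unset Printing Implicit Defensive.

Import GRing.Theory.
Local Open Scope ring_scope.

Section PermutationAndDiagonalMatrices.
Variable T : pzSemiRingType.

Lemma mul_tr_perm_mx n (s : 'S_n) : (perm_mx s)^T *m perm_mx s = 1%:M :> 'M[T]_n.
Proof. by rewrite tr_perm_mx -perm_mxM mulVg perm_mx1. Qed.

Lemma tr_perm_mx_conj_diag n (s : 'S_n) (d : 'I_n -> T) :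
  (perm_mx s)^T *m diag_mx (\row_i d i) *m perm_mx s =
  diag_mx (\row_i d ((s^-1)%g i)).
Proof.
rewrite tr_perm_mx -row_permE -{2}(invgK s) -col_permE.
by apply/matrixP=> i j; rewrite !mxE (inj_eq perm_inj).
Qed.

Lemma lead_sub_diag q (r : 'I_q) (d : 'I_q -> T) :
  lead_sub r (diag_mx (\row_i d i)) =
  diag_mx (\row_(i < r) d (widen_ord (ltnW (ltn_ord r)) i)).
Proof. by apply/matrixP=> i j; rewrite !mxE. Qed.

Variable U : pzSemiRingType.
Variable f : T -> U.
Hypothesis f0 : f 0 = 0.

Lemma map_mx_diag_mx n (d : 'I_n -> T) :
  map_mx f (diag_mx (\row_i d i)) = diag_mx (\row_i f (d i)).
Proof. by apply/matrixP=> i j; rewrite !mxE; case: (_ == _); rewrite ?mulr1n. Qed.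

Hypothesis f1 : f 1 = 1.

Lemma map_mx_perm_mx n (s : 'S_n) : map_mx f (perm_mx s) = perm_mx s.
Proof. by apply/matrixP=> i j; rewrite !mxE; case: (_ == _). Qed.

End PermutationAndDiagonalMatrices.

Lemma prodR_gt0 n (x : 'I_n -> R) :
  (forall i, Rlt 0 (x i)) -> Rlt 0 (\prod_i x i).
Proof. by move=> x_gt0; apply: big_ind => //; [exact: Rlt_0_1 | exact: Rmult_lt_0_compat]. Qed.

Lemma ln_prod n (x : 'I_n -> R) :
  (forall i, Rlt 0 (x i)) -> ln (\prod_i x i) = \sum_i ln (x i).
Proof.
move=> x_gt0; suff [] : ln (\prod_i x i) = \sum_i ln (x i) /\ Rlt 0 (\prod_i x i) by [].
apply: (big_rec2 (fun s p => ln p = s /\ Rlt 0 p)) => [|i s p _ [<- p_gt0]].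
  by split; [exact: ln_1 | exact: Rlt_0_1].
by split; [rewrite ln_mult | exact: Rmult_lt_0_compat].
Qed.

Lemma ln_prod_widen q (r : 'I_q) (b : 'I_q -> R) :
  (forall i, Rlt 0 (b i)) ->
  ln (\prod_(i < r) b (widen_ord (ltnW (ltn_ord r)) i)) = \sum_(i < q | (i < r)%N) ln (b i).
Proof. by move=> b_gt0; rewrite ln_prod // (big_ord_narrow (ltnW (ltn_ord r))). Qed.

Lemma RtoC_mul x y : RtoC (x * y) = RtoC x * RtoC y.
Proof. by rewrite /GRing.mul /= /Cmul /= !Rmult_0_l !Rmult_0_r Rminus_0_r Rplus_0_r. Qed.

Lemma RtoC_prod n (x : 'I_n -> R) : RtoC (\prod_i x i) = \prod_i RtoC (x i).
Proof. exact: (big_morph RtoC RtoC_mul). Qed.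

Lemma det_diag_RtoC n (x : 'I_n -> R) :
  \det (diag_mx (\row_i RtoC (x i))) = RtoC (\prod_i x i).
Proof. by rewrite det_diag RtoC_prod; under eq_bigr do rewrite mxE. Qed.

Lemma Cconj0 : Cconj 0 = 0.
Proof. by rewrite /Cconj /= Ropp_0. Qed.

Lemma Cconj1 : Cconj 1 = 1.
Proof. by rewrite /Cconj /= Ropp_0. Qed.

Lemma Cconj_RtoC x : Cconj (RtoC x) = RtoC x.
Proof. by rewrite /Cconj /= Ropp_0. Qed.

Lemma Hconj0 : Hconj 0 = 0.
Proof. by rewrite /Hconj /= Ropp_0. Qed.

Lemma Hconj1 : Hconj 1 = 1.
Proof. by rewrite /Hconj /= Ropp_0. Qed.

Lemma cplx_rep_diag n (d : 'I_n -> R) :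
  cplx_rep (diag_mx (\row_i RtoH (d i))) =
  block_mx (diag_mx (\row_i RtoC (d i))) 0 0 (diag_mx (\row_i RtoC (d i))).
Proof.
rewrite /cplx_rep !map_mx_diag_mx //; try exact: Cconj0.
congr block_mx; apply/matrixP=> i j; rewrite !mxE.
- by rewrite mul0rn.
- by rewrite [Cconj _]Cconj0 mul0rn oppr0.
- by rewrite [Cconj _]Cconj_RtoC.
Qed.

Section LogMinorsAtPermutations.
Variables (q : nat) (a : 'I_q -> R).
Hypothesis a_gt0 : forall i, Rlt 0 (a i).
Variables (s : 'S_q) (r : 'I_q).

Let d (i : 'I_r) := a ((s^-1)%g (widen_ord (ltnW (ltn_ord r)) i)).

Lemma lead_sub_perm_conj_diag (T : pzSemiRingType) (e : R -> T) :
  lead_sub r ((perm_mx s)^T *m diag_mx (\row_i e (a i)) *m perm_mx s) =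
  diag_mx (\row_i e (d i)).
Proof. by rewrite tr_perm_mx_conj_diag lead_sub_diag. Qed.

Lemma ln_prod_perm : ln (\prod_i d i) = \sum_(i < q | (i < r)%N) ln (a ((s^-1)%g i)).
Proof. by rewrite /d (@ln_prod_widen _ _ (fun i => a ((s^-1)%g i))). Qed.

Lemma fR_perm_mx : fR a r (perm_mx s) = \sum_(i < q | (i < r)%N) ln (a ((s^-1)%g i)).
Proof.
rewrite /fR /DeltaR /adjR /diagR (@lead_sub_perm_conj_diag _ id) det_diag.
by rewrite -ln_prod_perm; under eq_bigr do rewrite mxE.
Qed.

Lemma fC_perm_mx : fC a r (perm_mx s) = \sum_(i < q | (i < r)%N) ln (a ((s^-1)%g i)).
Proof.
rewrite /fC /DeltaC /adjC /diagC map_mx_perm_mx ?Cconj0 ?Cconj1 //.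
by rewrite lead_sub_perm_conj_diag det_diag_RtoC ln_prod_perm.
Qed.

Lemma fH_perm_mx : fH a r (perm_mx s) = \sum_(i < q | (i < r)%N) ln (a ((s^-1)%g i)).
Proof.
rewrite /fH /DeltaH /adjH /diagH map_mx_perm_mx ?Hconj0 ?Hconj1 //.
rewrite lead_sub_perm_conj_diag /dieudonne_det cplx_rep_diag det_ublock.
rewrite det_diag_RtoC -RtoC_mul sqrt_square ?ln_prod_perm //.
by apply: Rlt_le; apply: prodR_gt0 => i; apply: a_gt0.
Qed.

End LogMinorsAtPermutations.

Section PermutationInvariantSums.
Variables (q : nat) (b D : 'I_q -> R) (K : R).
Hypothesis sum_perm_const : forall s : 'S_q, \sum_i b (s i) * D i = K.

Lemma sum_perm_const_swap j x : (D x - D j) * (b j - b x) = 0.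
Proof.
have [<-|neq_jx] := eqVneq j x; first by rewrite !subrr mulr0.
pose rest (s : 'S_q) := \sum_(i | (i != j) && (i != x)) b (s i) * D i.
have expand (s : 'S_q) : \sum_i b (s i) * D i = b (s j) * D j + (b (s x) * D x + rest s).
  by rewrite (bigD1 j) // (bigD1 x) 1?eq_sym.
have rest_swap : rest (tperm j x) = rest 1%g.
  by apply: eq_bigr => i /andP[ij ix]; rewrite perm1 tpermD // eq_sym.
have := sum_perm_const (tperm j x); rewrite -(sum_perm_const 1%g) !expand.
rewrite tpermL tpermR rest_swap !perm1 !addrA => /addIr eq_swap.
have -> : (D x - D j) * (b j - b x) = b x * D j + b j * D x - (b j * D j + b x * D x).
  by ring.
by rewrite eq_swap subrr.
Qed.

Lemma sum_perm_const_weights_eq : (exists u v, b u <> b v) -> forall i j, D i = D j.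
Proof.
case=> u [v buv].
have D_eq i j : b i <> b j -> D i = D j.
  move=> bij; have /Rmult_integral[/subr0_eq //|/subr0_eq bji] := sum_perm_const_swap i j.
  by case: bij.
suff D_u i : D i = D u by move=> i j; rewrite D_u (D_u j).
have [biu|/D_eq //] := Req_EM_T (b i) (b u).
by rewrite (D_eq i v) ?biu // (D_eq v u) // => bvu; apply: buv.
Qed.

End PermutationInvariantSums.

Section TailSums.
Variables (q : nat) (c : 'I_q -> R).

Definition tail_sum (i : 'I_q) := \sum_(r : 'I_q | (0 < r)%N && (i < r)%N) c r.

Lemma sum_mul_partial_sum (b : 'I_q -> R) :
  \sum_(r < q | (0 < r)%N) c r * \sum_(i < q | (i < r)%N) b i =
  \sum_i b i * tail_sum i.
Proof.
under eq_bigr do rewrite mulr_sumr.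
rewrite (exchange_big_dep predT) //=; apply: eq_bigr => i _.
by rewrite mulr_sumr; apply: eq_bigr => r _; rewrite mulrC.
Qed.

Lemma tail_sum_const_coef0 :
  (forall i j, tail_sum i = tail_sum j) -> forall r : 'I_q, (0 < r)%N -> c r = 0.
Proof.
move=> tail_const r r_gt0.
have tail0 i : tail_sum i = 0.
  have last_lt : (q.-1 < q)%N by have := ltn_ord r; lia.
  rewrite (tail_const i (Ordinal last_lt)) /tail_sum big_pred0 // => k.
  by apply/negbTE; have := ltn_ord k; rewrite /=; lia.
have pred_lt : (r.-1 < q)%N by have := ltn_ord r; lia.
have := tail0 (Ordinal pred_lt); rewrite /tail_sum (bigD1 r) /=; last by lia.
rewrite (eq_bigl (fun k : 'I_q => (0 < k)%N && (r < k)%N)) => [|k].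
  by rewrite -/(tail_sum r) tail0 addr0.
by rewrite -val_eqE /=; lia.
Qed.

End TailSums.

Lemma lin_indep_with_one_perm_mx (T : pzSemiRingType) q (P : 'M[T]_q -> Prop)
    (f : 'I_q -> 'M[T]_q -> R) (b : 'I_q -> R) :
  (exists u v, b u <> b v) ->
  (forall s : 'S_q, P (perm_mx s)) ->
  (forall (s : 'S_q) r, f r (perm_mx s) = \sum_(i < q | (i < r)%N) b ((s^-1)%g i)) ->
  lin_indep_with_one P f.
Proof.
move=> b_nonconst P_perm f_perm c0 c comb0.
have sum_perm_const (s : 'S_q) : \sum_i b (s i) * tail_sum c i = - c0.
  have := comb0 _ (P_perm (s^-1)%g); rewrite mulr1 => /eqP; rewrite addrC addr_eq0.
  by under eq_bigr do rewrite f_perm invgK; rewrite sum_mul_partial_sum => /eqP.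
have c_eq0 := tail_sum_const_coef0 (sum_perm_const_weights_eq sum_perm_const b_nonconst).
split=> //; have := comb0 _ (P_perm 1%g).
by rewrite big1 => [|r /c_eq0 ->]; rewrite ?mul0r // mulr1 addr0.
Qed.

Theorem lemma4p6 (q : nat) (a : 'I_q -> R) :
  (2 <= q)%N ->
  (forall i, Rpositive (a i)) ->
  (exists i j, a i <> a j) ->
  [/\ lin_indep_with_one (@unitaryR q) (fR a),
      lin_indep_with_one (@unitaryC q) (fC a) &
      lin_indep_with_one (@unitaryH q) (fH a)].
Proof.
move=> _ a_gt0 [i [j a_ij]].
have ln_a_nonconst : exists u v, ln (a u) <> ln (a v).
  by exists i, j => /(ln_inv _ _ (a_gt0 i) (a_gt0 j)).
split; apply: (lin_indep_with_one_perm_mx (b := fun i => ln (a i))) => // s.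
- exact: mul_tr_perm_mx.
- exact: fR_perm_mx.
- by rewrite /unitaryC /adjC map_mx_perm_mx ?Cconj0 ?Cconj1 // mul_tr_perm_mx.
- exact: fC_perm_mx.
- by rewrite /unitaryH /adjH map_mx_perm_mx ?Hconj0 ?Hconj1 // mul_tr_perm_mx.
- exact: fH_perm_mx.
Qed.
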